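(* Let $X,Y,Z,W$ be Banach spaces, $F:X\times Y\rightrightarrows Z$ a multifunction, $g:W\to Z$ a function, and $(\overline{x},\overline{y},\overline{z},\overline{w})\in X\times Y\times Z\times W$ with $\overline{z}:=-g(\overline{w})\in F(\overline{x},\overline{y})$. Define $\Gamma:Y\times W\rightrightarrows X$ by $\Gamma(y,w)=\{x\in X: 0\in F(x,y)+g(w)\}$. Suppose: (i) $F$ is Lipschitz-like with respect to $y$ uniformly in $x$ around $((\overline{x},\overline{y}),\overline{z})$ with constant $\eta\ge0$; (ii) $F$ is metrically regular with respect to $x$ uniformly in $y$ around $((\overline{x},\overline{y}),\overline{z})$ with constant $k>0$; (iii) $F(\cdot,y)$ is inner semicontinuous at $(\overline{x},\overline{z})$ for every $y$ in a neighborhood of $\overline{y}$; (iv) $g$ is locally Lipschitz around $\overline{w}$ with constant $\lambda$. Then there exists $\alpha>0$ such that for every $(y,w),(y',w')\in D(\overline{y},\alpha)\times D(\overline{w},\alpha)$ and every $\varepsilon>0$, \[ \Gamma(y',w')\cap D(\overline{x},\alpha)\subset\Gamma(y,w)+(k+\varepsilon)(\eta\|y-y'\|+\lambda\|w-w'\|)\mathbb{D}_X. \] In particular, $\Gamma$ is Lipschitz-like around $((\overline{y},\overline{w}),\overline{x})$ and \[ \operatorname{lip}\Gamma((\overline{y},\overline{w}),\overline{x})\le\widehat{\operatorname{reg}}_xF((\overline{x},\overline{y}),\overline{z})\cdot\max\{\widehat{\operatorname{lip}}_yF((\overline{x},\overline{y}),\overline{z}),\operatorname{lip}g(\overline{w})\}.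 \]
   Context: $B(x,r)$ and $D(x,r)$ are the open and closed balls, $\mathbb{D}_X$ the closed unit ball, $d(x,\emptyset)=\infty$; products carry the sum norm. For $F:X\times Y\rightrightarrows Z$ write $F_y=F(\cdot,y)$, $F_x=F(x,\cdot)$. $F$ is Lipschitz-like with respect to $y$ uniformly in $x$ around $((\overline{x},\overline{y}),\overline{z})$ with constant $L$ if there are neighborhoods $U$ of $\overline{x}$, $V$ of $\overline{y}$, $W_0$ of $\overline{z}$ with $F(x,y)\cap W_0\subset F(x,y')+L\|y-y'\|\mathbb{D}_Z$ for all $x\in U$, $y,y'\in V$; $\widehat{\operatorname{lip}}_yF((\overline{x},\overline{y}),\overline{z})$ is the infimum of such $L$. $F$ is metrically regular with respect to $x$ uniformly in $y$ around $((\overline{x},\overline{y}),\overline{z})$ with constant $L$ if there are such neighborhoods with $d(x,F_y^{-1}(z))\le L\,d(z,F_y(x))$ for all $(x,y,z)\in U\times V\times W_0$; $\widehat{\operatorname{reg}}_xF((\overline{x},\overline{y}),\overline{z})$ is the infimum of such $L$. A multifunction $T$ is inner semicontinuous at $(a,b)\in\operatorname{Gr}T$ if for every open $D\ni b$ there is a neighborhood $U$ of $a$ with $T(a')\cap D\ne\emptyset$ for all $a'\in U$. $T:A\rightrightarrows B$ is Lipschitz-like around $(\overline{a},\overline{b})$ with constant $L$ if there are neighborhoods $U$ of $\overline{a}$, $V$ of $\overline{b}$ with $T(a)\cap V\subset T(u)+L\|a-u\|\mathbb{D}_B$ for all $a,u\in U$; $\operatorname{lip}T(\overline{a},\overline{b})$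 is the infimum of such $L$; for a function $g$, $\operatorname{lip}g(\overline{w})$ is the infimum of Lipschitz constants of $g$ on neighborhoods of $\overline{w}$. *)

(* Banach spaces = completeNormedModType over R : realType. *)
From HB Require Import structures.
From mathcomp Require Import all_boot all_order all_algebra.
From mathcomp Require Import all_classical all_reals all_analysis.
Set Implicit Arguments. Unset Strict Implicit. Unset Printing Implicit Defensive.
Import Order.TTheory GRing.Theory Num.Theory.
Import numFieldNormedType.Exports.
Local Open Scope classical_set_scope.
Local Open Scope ring_scope.

Section Defs.
Context {R : realType}.

Definition cball {V : normedModType R} (x : V) (r : R) : set V :=
  [set u | `|u - x| <= r].

(* distance to a set, in extended reals; d(x, emptyset) = +oo *)
Definition edist {V : normedModType R} (x : V) (A : set V) : \bar R :=
  ereal_inf [set (`|x - a|)%:E | a in A].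

Definition lip_like_y_unif {X Y Z : normedModType R} (F : X -> Y -> set Z)
    (xb : X) (yb : Y) (zb : Z) (L : R) : Prop :=
  exists U V W0, [/\ nbhs xb U, nbhs yb V, nbhs zb W0 &
    forall x y y', U x -> V y -> V y' ->
      forall z, F x y z -> W0 z ->
        exists2 z', F x y' z' & `|z - z'| <= L * `|y - y'|].

Definition lip_y_hat {X Y Z : normedModType R} (F : X -> Y -> set Z)
    (xb : X) (yb : Y) (zb : Z) : \bar R :=
  ereal_inf [set L%:E | L in [set L : R | 0 <= L /\ lip_like_y_unif F xb yb zb L]].

Definition metreg_x_unif {X Y Z : normedModType R} (F : X -> Y -> set Z)
    (xb : X) (yb : Y) (zb : Z) (L : R) : Prop :=
  exists U V W0, [/\ nbhs xb U, nbhs yb V, nbhs zb W0 &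
    forall x y z, U x -> V y -> W0 z ->
      (edist x [set x' | F x' y z] <= L%:E * edist z (F x y))%E].

Definition reg_x_hat {X Y Z : normedModType R} (F : X -> Y -> set Z)
    (xb : X) (yb : Y) (zb : Z) : \bar R :=
  ereal_inf [set L%:E | L in [set L : R | 0 <= L /\ metreg_x_unif F xb yb zb L]].

Definition inner_semicont {A B : normedModType R} (T : A -> set B) (a : A) (b : B) : Prop :=
  forall D : set B, open D -> D b ->
    exists2 U, nbhs a U & forall a', U a' -> T a' `&` D !=set0.

Definition loc_lipschitz {W Z : normedModType R} (g : W -> Z) (wb : W) (L : R) : Prop :=
  exists2 N, nbhs wb N & forall w w', N w -> N w' -> `|g w - g w'| <= L * `|w - w'|.

Definition lip_fun {W Z : normedModType R} (g : W -> Z) (wb : W) : \bar R :=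
  ereal_inf [set L%:E | L in [set L : R | 0 <= L /\ loc_lipschitz g wb L]].

(* T : Y x W =>> X Lipschitz-like around ((yb,wb),xb) with constant L,
   the product Y x W carrying the sum norm ||y|| + ||w||. *)
Definition lip_like2 {Y W X : normedModType R} (T : Y -> W -> set X)
    (yb : Y) (wb : W) (xb : X) (L : R) : Prop :=
  exists U V, [/\ nbhs (yb, wb) U, nbhs xb V &
    forall p q : Y * W, U p -> U q ->
      forall x, T p.1 p.2 x -> V x ->
        exists2 x', T q.1 q.2 x' &
          `|x - x'| <= L * (`|p.1 - q.1| + `|p.2 - q.2|)].

Definition lip_mult2 {Y W X : normedModType R} (T : Y -> W -> set X)
    (yb : Y) (wb : W) (xb : X) : \bar R :=
  ereal_inf [set L%:E | L in [set L : R | 0 <= L /\ lip_like2 T yb wb xb L]].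

Definition Gamma {X Y Z W : normedModType R} (F : X -> Y -> set Z) (g : W -> Z)
    (y : Y) (w : W) : set X :=
  [set x | exists2 z, F x y z & z + g w = 0].

End Defs.

From Pilot Require Import Defs.
From HB Require Import structures.
From mathcomp Require Import all_boot all_order all_algebra.
From mathcomp Require Import all_classical all_reals all_analysis.
From mathcomp Require Import lra.
Import Order.TTheory GRing.Theory Num.Theory.
Import numFieldNormedType.Exports.
Local Open Scope classical_set_scope.
Local Open Scope ring_scope.

(* Given x in Gamma(y', w'), i.e. -g(w') in F(x, y'), the Lipschitz-likeness of
   F in y and the Lipschitz continuity of g put a point of F(x, y) within
   r := eta |y - y'| + lambda |w - w'| of -g(w); metric regularity of F(., y)
   at the level -g(w) then yields a point of Gamma(y, w), i.e. a solution of
   -g(w) in F(., y), within (k + eps) r of x.  All the data stay in the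
   neighborhoods where the hypotheses hold as soon as (y, w), (y', w') and x
   lie in small enough balls, g being continuous at wb.  The constant
   estimate passes to the infima defining reg and lip because the three
   properties are upward closed in their constants. *)

Section Metric.
Context {R : realType}.

Lemma nbhs_cball {V : normedModType R} (x : V) (r : R) :
  0 < r -> nbhs x (cball x r).
Proof.
move=> r_gt0; apply/nbhs_ballP; exists r => // y.
by rewrite -ball_normE /ball_ /cball /= distrC => /ltW.
Qed.

Lemma nbhs_cball_sub {V : normedModType R} {x : V} {A : set V} :
  nbhs x A -> exists2 r : R, 0 < r & cball x r `<=` A.
Proof.
move=> /nbhs_ballP [e e_gt0 eA]; exists (e / 2); first by rewrite divr_gt0.
move=> y; rewrite /cball => yx; apply: eA.
rewrite -ball_normE /ball_ /= distrC; apply: le_lt_trans yx _.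
by rewrite ltr_pdivrMr // ltr_pMr // ltr1n.
Qed.

Lemma cball_le {V : normedModType R} {x : V} {r s : R} :
  r <= s -> cball x r `<=` cball x s.
Proof. by move=> rs y /le_trans; apply. Qed.

Lemma edist_le_norm {V : normedModType R} (x : V) {A : set V} {a : V} :
  A a -> (Defs.edist x A <= (`|x - a|)%:E)%E.
Proof. by move=> Aa; apply: ereal_inf_lbound; exists a. Qed.

Lemma edist_lt_norm {V : normedModType R} (x : V) (A : set V) (c : R) :
  (Defs.edist x A < c%:E)%E -> exists2 a, A a & `|x - a| < c.
Proof.
by move=> /ereal_inf_lt [_ [a Aa <-]]; rewrite lte_fin => xa; exists a.
Qed.

Lemma edist_ge0 {V : normedModType R} (x : V) (A : set V) :
  (0 <= Defs.edist x A)%E.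
Proof. by apply: le_ereal_inf_tmp => _ [a _ <-]; rewrite lee_fin. Qed.

(* The slack eps is needed because the distance need not be attained. *)
Lemma edist_regular_point {V U : normedModType R} {x : V} {z b : U}
    {A : set V} {B : set U} {k eps r : R} :
  0 < k -> 0 < eps -> 0 < r -> B b -> `|z - b| <= r ->
  (Defs.edist x A <= k%:E * Defs.edist z B)%E ->
  exists2 a, A a & `|x - a| < (k + eps) * r.
Proof.
move=> k_gt0 eps_gt0 r_gt0 Bb zb xA; apply: edist_lt_norm.
apply: (le_lt_trans xA); apply: (@le_lt_trans _ _ (k%:E * r%:E)%E).
  apply: lee_wpmul2l; first by rewrite lee_fin ltW.
  by apply: (le_trans (edist_le_norm z Bb)); rewrite lee_fin.
by rewrite -EFinM lte_fin ltr_pM2r // ltrDl.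
Qed.

Lemma loc_lipschitzN {W Z : normedModType R} {g : W -> Z} {wb : W} {L : R} :
  loc_lipschitz g wb L -> loc_lipschitz (fun w => - g w) wb L.
Proof.
by move=> [N N_wb gN]; exists N => // w w' Nw Nw'; rewrite -opprD normrN; apply: gN.
Qed.

Lemma loc_lipschitz_nbhs {W Z : normedModType R} {g : W -> Z} {wb : W} {L : R}
    {A : set Z} :
  loc_lipschitz g wb L -> nbhs (g wb) A -> nbhs wb (g @^-1` A).
Proof.
move=> [N /nbhs_ballP [rN rN_gt0 rNN] gN] /nbhs_ballP [e e_gt0 eA].
have L1_gt0 : 0 < `|L| + 1 by rewrite ltr_wpDl.
apply/nbhs_ballP; exists (Num.min rN (e / (`|L| + 1))).
  by rewrite /= lt_min rN_gt0 divr_gt0.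
move=> u; rewrite -ball_normE /ball_ /= lt_min => /andP [u_rN u_e].
apply: eA; rewrite -ball_normE /ball_ /=.
have Nwb : N wb by apply: rNN; apply: ballxx.
have Nu : N u by apply: rNN; rewrite -ball_normE.
apply: le_lt_trans (gN _ _ Nwb Nu) _.
apply: (@le_lt_trans _ _ (`|L| * `|wb - u|)); first by rewrite ler_wpM2r // ler_norm.
apply: (@le_lt_trans _ _ ((`|L| + 1) * `|wb - u|)); first by rewrite ler_wpM2r // lerDl.
by rewrite mulrC -ltr_pdivlMr.
Qed.

End Metric.

Lemma GammaE {R : realType} {X Y Z W : normedModType R}
    (F : X -> Y -> set Z) (g : W -> Z) y w :
  Gamma F g y w = [set x | F x y (- g w)].
Proof.
apply/seteqP; split => x /=.
  by move=> [z Fz /eqP]; rewrite addr_eq0 => /eqP <-.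
by move=> Fx; exists (- g w) => //; rewrite addNr.
Qed.

Lemma Gamma_point_estimate {R : realType} {X Y Z W : normedModType R}
    {F : X -> Y -> set Z} {g : W -> Z} {eta k lambda eps : R}
    {x : X} {y y' : Y} {w w' : W} :
  0 < k -> 0 < eps ->
  (exists2 z, F x y z & `|- g w' - z| <= eta * `|y' - y|) ->
  `|g w' - g w| <= lambda * `|w' - w| ->
  (Defs.edist x (Gamma F g y w) <= k%:E * Defs.edist (- g w)%R (F x y))%E ->
  exists2 x0, Gamma F g y w x0 &
    `|x - x0| <= (k + eps) * (eta * `|y - y'| + lambda * `|w - w'|).
Proof.
move=> k_gt0 eps_gt0 [z Fz z_near] g_lip reg.
set r := eta * `|y - y'| + lambda * `|w - w'|.
have gw_z : `|- g w - z| <= r.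
  have -> : - g w - z = (g w' - g w) + (- g w' - z) by rewrite addrCA addrA addKr.
  apply: (le_trans (ler_normD _ _)).
  by move: z_near g_lip; rewrite /r (distrC y) (distrC w); lra.
have [r0 | r_neq0] := eqVneq r 0.
  exists x; last by rewrite subrr normr0 r0 mulr0.
  by move: gw_z; rewrite r0 normr_le0 subr_eq0 GammaE => /eqP ->.
have r_gt0 : 0 < r by rewrite lt_neqAle eq_sym r_neq0 (le_trans _ gw_z).
have [x0 Gx0 xx0] := edist_regular_point k_gt0 eps_gt0 r_gt0 Fz gw_z reg.
by exists x0 => //; apply: ltW.
Qed.

Section LocalEstimate.
Context {R : realType} {X Y Z W : normedModType R}.
Variables (F : X -> Y -> set Z) (g : W -> Z) (xb : X) (yb : Y) (wb : W).
Variables (eta k lambda : R).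
Hypotheses (k_gt0 : 0 < k) (F_lip : lip_like_y_unif F xb yb (- g wb) eta)
  (F_reg : metreg_x_unif F xb yb (- g wb) k) (g_lip : loc_lipschitz g wb lambda).

Lemma Gamma_local_estimate : exists2 alpha : R, 0 < alpha &
  forall (y y' : Y) (w w' : W),
    cball yb alpha y -> cball yb alpha y' ->
    cball wb alpha w -> cball wb alpha w' ->
    forall eps : R, 0 < eps ->
    forall x, Gamma F g y' w' x -> cball xb alpha x ->
      exists2 x0, Gamma F g y w x0 &
        `|x - x0| <= (k + eps) * (eta * `|y - y'| + lambda * `|w - w'|).
Proof.
have [U1 [V1 [W1 [U1x V1y W1z F_lipP]]]] := F_lip.
have [U2 [V2 [W2 [U2x V2y W2z F_regP]]]] := F_reg.
have [N Nw g_lipP] := g_lip.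
have W12g : nbhs wb ((fun u => - g u) @^-1` (W1 `&` W2)).
  by apply: (loc_lipschitz_nbhs (loc_lipschitzN g_lip)); apply: filterI.
have [rX rX_gt0 rXU] := nbhs_cball_sub (filterI U1x U2x).
have [rY rY_gt0 rYV] := nbhs_cball_sub (filterI V1y V2y).
have [rW rW_gt0 rWN] := nbhs_cball_sub (filterI Nw W12g).
set alpha := Num.min rX (Num.min rY rW).
exists alpha; first by rewrite !lt_min rX_gt0 rY_gt0.
have [aX aY aW] : [/\ alpha <= rX, alpha <= rY & alpha <= rW].
  by rewrite !ge_min !lexx !orbT.
move=> y y' w w' /(cball_le aY)/rYV [y1 y2] /(cball_le aY)/rYV [y'1 y'2].
move=> /(cball_le aW)/rWN [wN [w1 w2]] /(cball_le aW)/rWN [w'N [w'1 _]].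
move=> eps eps_gt0 x; rewrite GammaE => Fx /(cball_le aX)/rXU [x1 x2].
apply: (Gamma_point_estimate k_gt0 eps_gt0); first exact: F_lipP.
- exact: g_lipP.
- by rewrite GammaE; apply: F_regP.
Qed.

Lemma Gamma_lip_like (eps : R) : 0 < eps -> 0 <= eta -> 0 <= lambda ->
  lip_like2 (Gamma F g) yb wb xb ((k + eps) * Num.max eta lambda).
Proof.
move=> eps_gt0 eta_ge0 lambda_ge0.
have [a a_gt0 estimate] := Gamma_local_estimate.
exists [set p | cball yb a p.1 /\ cball wb a p.2], (cball xb a); split.
- by exists (cball yb a, cball wb a) => //; split; apply: nbhs_cball.
- exact: nbhs_cball.
move=> p q [p1 p2] [q1 q2] x Gx x_near.
have [x0 Gx0 xx0] := estimate _ _ _ _ q1 p1 q2 p2 _ eps_gt0 _ Gx x_near.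
exists x0 => //; apply: (le_trans xx0).
rewrite -mulrA; apply: ler_wpM2l; first by rewrite addr_ge0 // ltW.
rewrite (distrC q.1) (distrC q.2) mulrDr.
by rewrite lerD // ler_wpM2r // le_max lexx ?orbT.
Qed.

End LocalEstimate.

Section UpwardClosed.
Context {R : realType}.

Lemma metreg_x_unif_le {X Y Z : normedModType R} (F : X -> Y -> set Z) xb yb zb
    (k1 k2 : R) :
  k1 <= k2 -> metreg_x_unif F xb yb zb k1 -> metreg_x_unif F xb yb zb k2.
Proof.
move=> k12 [U [V [W0 [Ux Vy Wz F_reg]]]]; exists U, V, W0; split => // x y z Ux' Vy' Wz'.
apply: (le_trans (F_reg _ _ _ Ux' Vy' Wz')).
by apply: lee_wpmul2r; [exact: edist_ge0 | rewrite lee_fin].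
Qed.

Lemma lip_like_y_unif_le {X Y Z : normedModType R} (F : X -> Y -> set Z) xb yb zb
    (k1 k2 : R) :
  k1 <= k2 -> lip_like_y_unif F xb yb zb k1 -> lip_like_y_unif F xb yb zb k2.
Proof.
move=> k12 [U [V [W0 [Ux Vy Wz F_lip]]]]; exists U, V, W0; split => // x y y' Ux' Vy1 Vy2 z Fz Wz'.
have [z' Fz' zz'] := F_lip x y y' Ux' Vy1 Vy2 z Fz Wz'.
by exists z' => //; apply: (le_trans zz'); rewrite ler_wpM2r.
Qed.

Lemma loc_lipschitz_le {W Z : normedModType R} (g : W -> Z) wb (k1 k2 : R) :
  k1 <= k2 -> loc_lipschitz g wb k1 -> loc_lipschitz g wb k2.
Proof.
move=> k12 [N Nw g_lip]; exists N => // w w' Nw1 Nw2.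
by apply: (le_trans (g_lip _ _ Nw1 Nw2)); rewrite ler_wpM2r.
Qed.

Lemma ereal_inf_upclosed {P : R -> Prop} {L0 : R} :
  (forall u v, u <= v -> P u -> P v) -> 0 <= L0 -> P L0 ->
  exists s : R, [/\ ereal_inf [set L%:E | L in [set L | 0 <= L /\ P L]] = s%:E,
     0 <= s & forall d, 0 < d -> P (s + d)].
Proof.
move=> P_up L0_ge0 PL0.
set S := [set L%:E | L in [set L | 0 <= L /\ P L]].
have inf_le : (ereal_inf S <= L0%:E)%E by apply: ereal_inf_lbound; exists L0.
have inf_ge0 : (0 <= ereal_inf S)%E.
  by apply: le_ereal_inf_tmp => _ [L [L_ge0 _] <-]; rewrite lee_fin.
move: inf_le inf_ge0; case E : (ereal_inf S) => [s| |] //= _; rewrite lee_fin => s_ge0.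
exists s; split => // d d_gt0.
have : (ereal_inf S < (s + d)%:E)%E by rewrite E lte_fin ltrDl.
by move=> /ereal_inf_lt [_ [L [_ PL] <-]]; rewrite lte_fin => /ltW /P_up; apply.
Qed.

Lemma ereal_inf_le_approx (P : R -> Prop) (c : R) :
  (forall e, 0 < e -> exists2 L, 0 <= L /\ P L & L <= c + e) ->
  (ereal_inf [set L%:E | L in [set L : R | (0 <= L)%R /\ P L]] <= c%:E)%E.
Proof.
move=> approx; apply/lee_addgt0Pr => e /approx [L PL Lce].
apply: (@le_trans _ _ L%:E); first by apply: ereal_inf_lbound; exists L.
by rewrite -EFinD lee_fin.
Qed.

End UpwardClosed.

(* d := e / (r + 2m + 2 + e) is at most 1, so 2 d^2 <= 2 d. *)
Lemma perturbed_product_le {R : realType} {r m e : R} : 0 <= r -> 0 <= m -> 0 < e ->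
  exists2 d, 0 < d & (r + d + d) * (m + d) <= r * m + e.
Proof.
move=> r_ge0 m_ge0 e_gt0.
set D := r + 2 * m + 2 + e.
have D_gt0 : 0 < D by rewrite /D; lra.
exists (e / D); first by rewrite divr_gt0.
have dD : e / D * D = e by rewrite divfK // gt_eqF.
have : 0 < e / D by rewrite divr_gt0.
by move: dD; rewrite /D; nra.
Qed.

Lemma Gamma_lip_le {R : realType} {X Y Z W : normedModType R}
    {F : X -> Y -> set Z} {g : W -> Z} {xb : X} {yb : Y} {wb : W} {eta k lambda : R} :
  0 <= eta -> lip_like_y_unif F xb yb (- g wb) eta ->
  0 < k -> metreg_x_unif F xb yb (- g wb) k ->
  0 <= lambda -> loc_lipschitz g wb lambda ->
  (lip_mult2 (Gamma F g) yb wb xb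
     <= reg_x_hat F xb yb (- g wb)%R * maxe (lip_y_hat F xb yb (- g wb)%R) (lip_fun g wb))%E.
Proof.
move=> eta_ge0 F_lip k_gt0 F_reg lambda_ge0 g_lip.
have [r [Er r_ge0 Pr]] := ereal_inf_upclosed (@metreg_x_unif_le _ _ _ _ F xb yb _)
  (ltW k_gt0) F_reg.
have [a [Ea a_ge0 Pa]] := ereal_inf_upclosed (@lip_like_y_unif_le _ _ _ _ F xb yb _)
  eta_ge0 F_lip.
have [b [Eb b_ge0 Pb]] := ereal_inf_upclosed (@loc_lipschitz_le _ _ _ g wb)
  lambda_ge0 g_lip.
rewrite /reg_x_hat /lip_y_hat /lip_fun Er Ea Eb -EFin_max -EFinM.
apply: ereal_inf_le_approx => e e_gt0.
have m_ge0 : 0 <= Num.max a b by rewrite le_max a_ge0.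
have [d d_gt0 small] := perturbed_product_le r_ge0 m_ge0 e_gt0.
have [ad_ge0 bd_ge0] : 0 <= a + d /\ 0 <= b + d by rewrite !addr_ge0 // ltW.
exists ((r + d + d) * Num.max (a + d) (b + d)).
  split; last exact: Gamma_lip_like (ltr_wpDl r_ge0 d_gt0) (Pa _ d_gt0) (Pr _ d_gt0)
    (Pb _ d_gt0) _ d_gt0 ad_ge0 bd_ge0.
  by rewrite mulr_ge0 ?le_max ?ad_ge0 // !addr_ge0 // ltW.
apply: le_trans small; apply: ler_wpM2l; first by rewrite !addr_ge0 // ltW.
by rewrite ge_max !lerD2r !le_max !lexx !orbT.
Qed.

Theorem proposition4p1 (R : realType)
  (X Y Z W : completeNormedModType R)
  (F : X -> Y -> set Z) (g : W -> Z)
  (xb : X) (yb : Y) (wb : W) (eta k lambda : R) :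
  F xb yb (- g wb) ->
  0 <= eta -> lip_like_y_unif F xb yb (- g wb) eta ->
  0 < k -> metreg_x_unif F xb yb (- g wb) k ->
  (exists2 V, nbhs yb V & forall y, V y -> inner_semicont (F^~ y) xb (- g wb)) ->
  loc_lipschitz g wb lambda ->
  (exists2 alpha : R, 0 < alpha &
     forall (y y' : Y) (w w' : W),
       cball yb alpha y -> cball yb alpha y' ->
       cball wb alpha w -> cball wb alpha w' ->
       forall eps : R, 0 < eps ->
       forall x, Gamma F g y' w' x -> cball xb alpha x ->
         exists2 x0, Gamma F g y w x0 &
           `|x - x0| <= (k + eps) * (eta * `|y - y'| + lambda * `|w - w'|))
  /\ (exists L : R, lip_like2 (Gamma F g) yb wb xb L)
  /\ (lip_mult2 (Gamma F g) yb wb xb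
        <= reg_x_hat F xb yb (- g wb)%R *
           maxe (lip_y_hat F xb yb (- g wb)%R) (lip_fun g wb))%E.
Proof.
move=> _ eta_ge0 F_lip k_gt0 F_reg _ g_lip.
have lambda'_ge0 : 0 <= Num.max lambda 0 by rewrite le_max lexx orbT.
have g_lip' : loc_lipschitz g wb (Num.max lambda 0).
  by apply: loc_lipschitz_le g_lip; rewrite le_max lexx.
split; first exact: Gamma_local_estimate.
split.
  by eexists; exact: Gamma_lip_like k_gt0 F_lip F_reg g_lip' _ ltr01 eta_ge0 lambda'_ge0.
exact: Gamma_lip_le eta_ge0 F_lip k_gt0 F_reg lambda'_ge0 g_lip'.
Qed.
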